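(* Let $G=(S,R,\rho)$ be a $q$-linear grammar and $D$ its $q$-derivative. Then for all $n\ge1$ and $f,g\in\mathbb{E}$, \[ D^n(fg)=\sum_{k=0}^n{n\brack k}_q\,D^k(f)\,\uparrow^k\!\big(D^{n-k}(g)\big). \]
   Context: $\mathbb{K}$ is a commutative ring with unity and characteristic zero, $q$ an indeterminate. For a set $S$ of master variables, $\mathbb{S}=\{s_i:s\in S,\ i\ge0\}$ is a set of non-commuting variables, $F(\mathbb{S})$ the free group on $\mathbb{S}$, $\mathbb{E}=\mathbb{K}[q][F(\mathbb{S})]$ its group algebra. A rule $R$ assigns to each $s_i$ an element $R(s_i)\in\mathbb{E}$, extended by $R(s_i^{-1})=-s_i^{-1}R(s_i)s_{i+1}^{-1}$. The up-arrow $\uparrow:\mathbb{E}\to\mathbb{E}$ is the $\mathbb{K}[q]$-linear map replacing each letter $s_i^{\pm1}$ of a word by $s_{i+1}^{\pm1}$, and $\uparrow^k$ is its $k$-th iterate. An order is a map rewriting each word by permuting its letters (extended linearly); KSO is the identity. A $q$-grammar is a triple $(S,R,\rho)$ with $\rho$ an order; its $q$-derivative is the $\mathbb{K}[q]$-linear map with $D(w_1\cdots w_n)=\sum_{j=1}^n\rho\big(w_1\cdots w_{j-1}R(w_j)\uparrow(w_{j+1}\cdots w_n)\big)$ for letters $w_j\in\mathbb{S}\cup\mathbb{S}^{-1}$, $D^0=\mathrm{id}$, $D^k=D\circ D^{k-1}$. A $q$-grammar is $q$-linear if $\rho=\mathrm{KSO}$ and $R(s_{i+1})=q\uparrow R(s_i)$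 for every $s_i\in\mathbb{S}$. ${n\brack k}_q=\frac{(q;q)_n}{(q;q)_k(q;q)_{n-k}}$, $(q;q)_n=\prod_{i=1}^n(1-q^i)$. *)

From mathcomp Require Import all_boot all_algebra.
Set Implicit Arguments. Unset Strict Implicit. Unset Printing Implicit Defensive.
Import GRing.Theory.
Local Open Scope ring_scope.

Definition char_zero (K : comNzRingType) : Prop :=
  forall n : nat, (0 < n)%N -> (n%:R : K) != 0.

Section QGrammar.
Variables (K : comNzRingType) (S : eqType).

(* A letter s_i^{+-1}: ((s, i), b) with b = true meaning the inverse s_i^{-1}. *)
Definition letter := (S * nat * bool)%type.
Definition letter_inv (x : letter) : letter := (x.1, ~~ x.2).

(* Words in the letters; a free-group element is a reduced word. *)
Definition word := seq letter.

Definition reduce (w : word) : word :=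
  foldr (fun x acc => if acc is y :: t then
                        (if y == letter_inv x then t else x :: acc)
                      else [:: x]) [::] w.

(* Elements of E = K[q][F(S)] are represented by formal finite K[q]-linear
   combinations of words; two representatives denote the same element of E
   iff they have the same coefficient on every reduced word. *)
Definition E := seq ({poly K} * word).

Definition coefE (f : E) (w : word) : {poly K} :=
  \sum_(p <- f | reduce p.2 == w) p.1.

Definition E_eq (f g : E) : Prop := forall w : word, coefE f w = coefE g w.

Definition wordE (w : word) : E := [:: (1, w)].
Definition addE (f g : E) : E := f ++ g.
Definition oppE (f : E) : E := [seq (- p.1, p.2) | p <- f].
Definition scaleE (c : {poly K}) (f : E) : E := [seq (c * p.1, p.2) | p <- f].
Definition mulE (f g : E) : E := [seq (p.1 * r.1, p.2 ++ r.2) | p <- f, r <- g].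
Definition sumE (fs : seq E) : E := flatten fs.

Definition upl (x : letter) : letter := (x.1.1, x.1.2.+1, x.2).
Definition upw (w : word) : word := map upl w.
Definition upE (f : E) : E := [seq (p.1, upw p.2) | p <- f].
Definition upEn (k : nat) (f : E) : E := iter k upE f.

Definition rule := S -> nat -> E.

Definition ruleL (R : rule) (x : letter) : E :=
  let: (s, i, b) := x in
  if b then oppE (mulE (mulE (wordE [:: (s, i, true)]) (R s i))
                       (wordE [:: (s, i.+1, true)]))
  else R s i.

Definition word_order := word -> word.
Definition KSO : word_order := fun w => w.

Definition orderE (rho : word_order) (f : E) : E := [seq (p.1, rho (reduce p.2)) | p <- f].

Definition Dword (R : rule) (rho : word_order) (w : word) : E :=
  sumE [seq (match drop j w with
             | x :: post => orderE rho
                  (mulE (mulE (wordE (take j w)) (ruleL R x)) (wordE (upw post)))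
             | [::] => [::]
             end) | j <- iota 0 (size w)].

Definition qderiv (R : rule) (rho : word_order) (f : E) : E :=
  sumE [seq scaleE p.1 (Dword R rho (reduce p.2)) | p <- f].

Definition qderivn (R : rule) (rho : word_order) (n : nat) (f : E) : E :=
  iter n (qderiv R rho) f.

Definition q_linear (R : rule) (rho : word_order) : Prop :=
  (forall w, rho w = KSO w) /\
  (forall s i, E_eq (R s i.+1) (scaleE 'X (upE (R s i)))).

End QGrammar.

Definition qpoch (K : comNzRingType) (n : nat) : {poly K} :=
  \prod_(i < n) (1 - 'X^(i.+1)).

Fixpoint qbinom (K : comNzRingType) (n k : nat) : {poly K} :=
  match n, k with
  | _, 0 => 1
  | 0, _.+1 => 0
  | n'.+1, k'.+1 => qbinom K n' k' + 'X^(k'.+1) * qbinom K n' k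
  end.

(* Elements of E are compared through the K[q]-linear functionals
   [ev c f = sum_p p.1 * c (reduce p.2)], c ranging over all functions of
   words; two representatives are E_eq exactly when all these functionals
   agree on them.  Against such a functional, D acts on a word like a twisted
   derivation, D(uv) = D(u) up(v) + u D(v), and the definition of R(s_i^-1)
   makes the contributions of a cancelling pair s s^-1 vanish, so D is well
   defined on the free group and D(fg) = D(f) up(g) + f D(g).  q-linearity
   gives D up = q up D, hence D (up^k h) = q^k up^k (D h).  Applying D to the
   formula for n and regrouping the two families of terms with the q-Pascal
   rule [n+1, k+1] = [n, k] + q^(k+1) [n, k+1] gives the formula for n + 1. *)
From Pilot Require Import Defs.
From mathcomp Require Import all_boot all_algebra.
Set Implicit Arguments.
Unset Strict Implicit.
Unset Printing Implicit Defensive.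
Import GRing.Theory.
Local Open Scope ring_scope.

Section FreeReduction.
Variable S : eqType.
Implicit Types (x y : letter S) (u v w : word S).

Definition reduce_step x (acc : word S) : word S :=
  if acc is y :: t then (if y == letter_inv x then t else x :: acc) else [:: x].

Lemma reduceE w : reduce w = foldr reduce_step [::] w.
Proof. by []. Qed.

Lemma reduce_cons x w : reduce (x :: w) = reduce_step x (reduce w).
Proof. by []. Qed.

Lemma letter_invK : involutive (@letter_inv S).
Proof. by case=> a b; rewrite /letter_inv /= negbK. Qed.

Fixpoint reduced w : bool :=
  if w is x :: ((y :: _) as t) then (y != letter_inv x) && reduced t else true.

Lemma reduced_tail x w : reduced (x :: w) -> reduced w.
Proof. by case: w => //= y w /andP[]. Qed.

Lemma reduced_step x v : reduced v -> reduced (reduce_step x v).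
Proof.
case: v => [|y t] //= rv; case: ifP => [_|/negbT yNx] /=.
  exact: reduced_tail rv.
by rewrite yNx rv.
Qed.

Lemma reduced_foldr r u : reduced r -> reduced (foldr reduce_step r u).
Proof. by move=> rr; elim: u => //= x u IH; apply: reduced_step. Qed.

Lemma reduced_reduce w : reduced (reduce w).
Proof. exact: reduced_foldr. Qed.

Lemma reduce_id w : reduced w -> reduce w = w.
Proof.
elim: w => // x t IH rxt; rewrite reduce_cons IH; last exact: reduced_tail rxt.
by case: t rxt {IH} => //= y t /andP[/negbTE ->].
Qed.

Lemma reduce_reduce w : reduce (reduce w) = reduce w.
Proof. exact/reduce_id/reduced_reduce. Qed.

Lemma reduce_stepK x v :
  reduced v -> reduce_step x (reduce_step (letter_inv x) v) = v.
Proof.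
case: v => [|y t] /=; first by rewrite eqxx.
rewrite letter_invK; case: eqP => [->|_] rv /=; last by rewrite eqxx.
by case: t rv => //= z t /andP[/negbTE ->].
Qed.

Lemma reduce_step_foldr r x v : reduced r -> reduced v ->
  reduce_step x (foldr reduce_step r v) = foldr reduce_step r (reduce_step x v).
Proof.
move=> rr; case: v => [|y t] //= rv; case: eqP => [->|] //=.
by rewrite reduce_stepK //; apply: reduced_foldr.
Qed.

Lemma foldr_reduce r u :
  reduced r -> foldr reduce_step r u = foldr reduce_step r (reduce u).
Proof.
move=> rr; elim: u => // x u IH.
by rewrite /= IH reduce_step_foldr //; apply: reduced_reduce.
Qed.

Lemma reduce_cat u v : reduce (u ++ v) = foldr reduce_step (reduce v) u.
Proof. by rewrite reduceE foldr_cat. Qed.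

Lemma reduce_catL u v : reduce (reduce u ++ v) = reduce (u ++ v).
Proof. by rewrite !reduce_cat -foldr_reduce //; apply: reduced_reduce. Qed.

Lemma reduce_catR u v : reduce (u ++ reduce v) = reduce (u ++ v).
Proof. by rewrite !reduce_cat reduce_reduce. Qed.

Lemma reduce_mid u v w : reduce (u ++ reduce v ++ w) = reduce (u ++ v ++ w).
Proof. by rewrite -reduce_catR reduce_catL reduce_catR. Qed.

Lemma reduce_consR x w : reduce (x :: reduce w) = reduce (x :: w).
Proof. by rewrite !reduce_cons reduce_reduce. Qed.

Lemma reduce_cancel x w : reduce (x :: letter_inv x :: w) = reduce w.
Proof. by rewrite !reduce_cons reduce_stepK //; apply: reduced_reduce. Qed.

Lemma reduce_cancel_mid u x w :
  reduce (u ++ x :: letter_inv x :: w) = reduce (u ++ w).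
Proof. by rewrite !reduce_cat reduce_cancel. Qed.

Lemma upl_inj : injective (@upl S).
Proof. by case=> [[a i] b] [[a' i'] b'] [-> -> ->]. Qed.

Lemma letter_inv_upl x : letter_inv (upl x) = upl (letter_inv x).
Proof. by case: x => [[a i] b]. Qed.

Lemma reduce_upw w : reduce (upw w) = upw (reduce w).
Proof.
elim: w => // x w IH; rewrite /upw /= -/(upw w) IH.
case: (reduce w) => [|y t] //=.
by rewrite letter_inv_upl (inj_eq upl_inj); case: ifP.
Qed.

Lemma upw_cons x w : upw (x :: w) = upl x :: upw w.
Proof. by []. Qed.

Lemma upw_cat u v : upw (u ++ v) = upw u ++ upw v.
Proof. exact: map_cat. Qed.

End FreeReduction.

Arguments reduce : simpl never.
Arguments upw : simpl never.

Section Evaluation.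
Variables (K : comNzRingType) (S : eqType).
Implicit Types (f g : E K S) (c : word S -> {poly K}).

Definition ev c f : {poly K} := \sum_(p <- f) p.1 * c (reduce p.2).

Lemma eq_ev c1 c2 f : c1 =1 c2 -> ev c1 f = ev c2 f.
Proof. by move=> eq_c; apply: eq_bigr => p _; rewrite eq_c. Qed.

Lemma ev_nil c : ev c [::] = 0.
Proof. exact: big_nil. Qed.

Lemma ev_cat c f g : ev c (f ++ g) = ev c f + ev c g.
Proof. exact: big_cat. Qed.

Lemma ev_sumE c fs : ev c (sumE fs) = \sum_(f <- fs) ev c f.
Proof.
elim: fs => [|f fs IH]; first by rewrite big_nil ev_nil.
by rewrite big_cons /sumE /= ev_cat -IH.
Qed.

Lemma ev_scaleE c a f : ev c (scaleE a f) = a * ev c f.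
Proof.
rewrite /ev big_map mulr_sumr; apply: eq_bigr => p _.
by rewrite mulrA.
Qed.

Lemma ev_oppE c f : ev c (oppE f) = - ev c f.
Proof.
rewrite /ev big_map -sumrN; apply: eq_bigr => p _.
by rewrite mulNr.
Qed.

Lemma ev_wordE c w : ev c (wordE K w) = c (reduce w).
Proof. by rewrite /ev big_seq1 mul1r. Qed.

Lemma ev_upE c f : ev c (upE f) = ev (fun w => c (upw w)) f.
Proof. by rewrite /ev big_map; apply: eq_bigr => p _; rewrite reduce_upw. Qed.

Lemma ev_reduce c f : ev (fun w => c (reduce w)) f = ev c f.
Proof. by apply: eq_bigr => p _; rewrite reduce_reduce. Qed.

Lemma ev_mulE c f g :
  ev c (mulE f g) = ev (fun u => ev (fun v => c (reduce (u ++ v))) g) f.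
Proof.
rewrite /ev big_allpairs_dep; apply: eq_bigr => p _.
rewrite mulr_sumr; apply: eq_bigr => r _.
by rewrite mulrA reduce_catL reduce_catR.
Qed.

Lemma ev_sandwich c u f v :
  ev c (mulE (mulE (wordE K u) f) (wordE K v)) =
  ev (fun w => c (reduce (u ++ w ++ v))) f.
Proof.
rewrite ev_mulE (eq_ev _ (fun w => ev_wordE _ _)) ev_mulE ev_wordE.
by apply: eq_ev => w; rewrite reduce_catL reduce_catR -catA reduce_catL.
Qed.

Lemma exchange_ev (F : word S -> word S -> {poly K}) f g :
  ev (fun u => ev (F u) g) f = ev (fun v => ev (F^~ v) f) g.
Proof.
rewrite /ev; under eq_bigr do rewrite mulr_sumr.
rewrite exchange_big; apply: eq_bigr => r _.
by rewrite mulr_sumr; apply: eq_bigr => p _; rewrite mulrCA.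
Qed.

Lemma ev_mull c a f : ev (fun w => a * c w) f = a * ev c f.
Proof. by rewrite /ev mulr_sumr; apply: eq_bigr => p _; rewrite mulrCA. Qed.

Lemma ev_addl c1 c2 f : ev (fun w => c1 w + c2 w) f = ev c1 f + ev c2 f.
Proof. by rewrite /ev -big_split; apply: eq_bigr => p _; rewrite mulrDr. Qed.

Lemma ev_coefE c f (U : seq (word S)) : uniq U ->
    {in f, forall p, reduce p.2 \in U} ->
  ev c f = \sum_(w <- U) Defs.coefE f w * c w.
Proof.
move=> uU fU; rewrite /Defs.coefE.
under eq_bigr do rewrite big_mkcond mulr_suml.
rewrite exchange_big /ev !big_seq; apply: eq_bigr => p fp.
rewrite (bigD1_seq (reduce p.2)) ?fU //= eqxx big1 ?addr0 // => w /negbTE wN.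
by rewrite eq_sym wN mul0r.
Qed.

Lemma E_eqP f g : E_eq f g <-> forall c, ev c f = ev c g.
Proof.
split=> [eq_fg c | eq_ev_fg w].
  pose U := undup [seq reduce p.2 | p <- f ++ g].
  have inU h : {subset h <= f ++ g} -> {in h, forall p, reduce p.2 \in U}.
    by move=> sub_h p hp; rewrite mem_undup; apply: map_f; apply: sub_h.
  have fU : {in f, forall p, reduce p.2 \in U}.
    by apply: inU => p; rewrite mem_cat => ->.
  have gU : {in g, forall p, reduce p.2 \in U}.
    by apply: inU => p; rewrite mem_cat orbC => ->.
  rewrite (ev_coefE c (undup_uniq _) fU) (ev_coefE c (undup_uniq _) gU).
  by apply: eq_bigr => w _; rewrite eq_fg.
have coefE_ev h : Defs.coefE h w = ev (fun v => (v == w)%:R) h.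
  rewrite /ev /Defs.coefE big_mkcond; apply: eq_bigr => p _.
  by case: eqP; rewrite ?mulr1 ?mulr0.
by rewrite !coefE_ev eq_ev_fg.
Qed.

End Evaluation.

Section GaussianBinomial.
Variable K : comNzRingType.

Lemma qbinom0 n : qbinom K n 0 = 1.
Proof. by case: n. Qed.

Lemma qbinomS n k :
  qbinom K n.+1 k.+1 = qbinom K n k + 'X^(k.+1) * qbinom K n k.+1.
Proof. by []. Qed.

Lemma qbinom_gt n k : (n < k)%N -> qbinom K n k = 0.
Proof.
elim: n k => [|n IH] [|k] // lt_nk.
by rewrite /= !IH ?mulr0 ?addr0 // ltnW.
Qed.

Lemma qbinom_pascal_sum (T : nat -> nat -> {poly K}) n :
  \sum_(0 <= k < n.+1) qbinom K n k * (T k.+1 (n - k)%N + 'X^k * T k (n - k).+1)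
  = \sum_(0 <= k < n.+2) qbinom K n.+1 k * T k (n.+1 - k)%N.
Proof.
under eq_bigr do rewrite mulrDr.
rewrite big_split [in RHS]big_nat_recl // [X in _ + X = _]big_nat_recl //.
under [in RHS]eq_bigr do rewrite qbinomS mulrDl subSS.
rewrite big_split [X in _ = _ + (_ + X)]big_nat_recr // !qbinom0 qbinom_gt //.
rewrite mulr0 mul0r /= addr0 expr0 !mul1r subn0 addrCA.
congr (_ + (_ + _)).
apply: eq_big_nat => k /andP[_ lt_kn].
by rewrite -subSn // subSS mulrA [qbinom K n k.+1 * _]mulrC.
Qed.

End GaussianBinomial.

Section QDerivative.
Variables (K : comNzRingType) (S : eqType) (R : rule K S) (rho : word_order S).
Hypothesis rhoK : forall w, rho w = KSO w.
Implicit Types (x : letter S) (u v w : word S) (f g h : E K S).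
Implicit Types c : word S -> {poly K}.

Lemma ev_orderE c f : ev c (orderE rho f) = ev c f.
Proof.
by rewrite /ev big_map; apply: eq_bigr => p _; rewrite rhoK reduce_reduce.
Qed.

Definition evD c w : {poly K} := ev c (Dword R rho w).

Lemma evD_nil c : evD c [::] = 0.
Proof. exact: ev_nil. Qed.

Lemma evD_cons c x w :
  evD c (x :: w) = ev (fun y => c (reduce (y ++ upw w))) (ruleL R x)
                 + evD (fun y => c (reduce (x :: y))) w.
Proof.
rewrite /evD /Dword /= -[iota 1 _]/(iota (1 + 0) _) iotaDl -map_comp.
rewrite /sumE /= ev_cat ev_orderE ev_sandwich -!/(sumE _) !ev_sumE !big_map.
congr (_ + _); apply: eq_bigr => j _ /=; rewrite add0n.
case: (drop j w) => [|y post]; first by rewrite !ev_nil.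
rewrite !ev_orderE !ev_sandwich; apply: eq_ev => v.
by rewrite reduce_consR.
Qed.

Lemma evD_cat c u v :
  evD c (u ++ v) = evD (fun y => c (reduce (y ++ upw v))) u
                 + evD (fun y => c (reduce (u ++ y))) v.
Proof.
elim: u c => [|x u IH] c; first by rewrite evD_nil add0r /evD ev_reduce.
rewrite cat_cons evD_cons IH evD_cons addrA.
congr (_ + _ + _); apply: eq_ev => y.
- by rewrite reduce_catL upw_cat catA.
- by rewrite reduce_consR reduce_catL.
- by rewrite reduce_consR.
Qed.

(* Adjacent letters x x^-1 contribute opposite terms to D: this is what the
   definition R(s_i^-1) = - s_i^-1 R(s_i) s_(i+1)^-1 is designed for. *)
Lemma ruleL_cancel c x w :
  ev (fun y => c (reduce (y ++ upw (letter_inv x :: w)))) (ruleL R x) +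
  ev (fun y => c (reduce (x :: reduce (y ++ upw w)))) (ruleL R (letter_inv x))
  = 0.
Proof.
case: x => [[s i] [|]] /=; rewrite ev_oppE ev_sandwich; first rewrite addrC;
  apply/eqP; rewrite subr_eq0; apply/eqP; apply: eq_ev => y; congr c.
- rewrite reduce_consR reduce_catL upw_cons -!catA -cat_cons.
  exact: esym (reduce_cancel_mid _ (s, i.+1, true) _).
- rewrite reduce_consR -[_ :: reduce _ ++ _]cat1s reduce_mid -!catA /=.
  exact: esym (reduce_cancel (s, i, false) _).
Qed.

Lemma evD_reduce c w : evD c (reduce w) = evD c w.
Proof.
elim: w c => [|x w IH] c //; rewrite [RHS]evD_cons -IH.
have -> : ev (fun y => c (reduce (y ++ upw w))) (ruleL R x) +
          evD (fun y => c (reduce (x :: y))) (reduce w) = evD c (x :: reduce w).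
  rewrite evD_cons; congr (_ + _); apply: eq_ev => y.
  by rewrite -reduce_upw reduce_catR.
rewrite reduce_cons; have := reduced_reduce w; move: (reduce w) => [|y t] rv //.
rewrite /reduce_step; case: eqP => [->|_] //.
rewrite !evD_cons /= addrA ruleL_cancel add0r /evD -ev_reduce.
by apply: eq_ev => z; rewrite reduce_consR reduce_cancel.
Qed.

Notation D := (qderiv R rho).

Lemma ev_qderiv c f : ev c (D f) = ev (evD c) f.
Proof.
by rewrite ev_sumE big_map; apply: eq_bigr => p _; rewrite ev_scaleE.
Qed.

Lemma ev_qderiv_mul c f g :
  ev c (D (mulE f g)) = ev c (mulE (D f) (upE g)) + ev c (mulE f (D g)).
Proof.
rewrite ev_qderiv !ev_mulE !ev_qderiv -ev_addl; apply: eq_ev => u.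
have -> : evD (fun u' => ev (fun v => c (reduce (u' ++ v))) (upE g)) u =
          ev (fun v => evD (fun y => c (reduce (y ++ upw v))) u) g.
  by rewrite /evD (eq_ev _ (fun u' => ev_upE _ _)) exchange_ev.
rewrite ev_qderiv -ev_addl; apply: eq_ev => v.
by rewrite evD_reduce evD_cat.
Qed.

Hypothesis R_succ : forall s i, E_eq (R s i.+1) (scaleE 'X (upE (R s i))).

Lemma ev_ruleL_upl c x :
  ev c (ruleL R (upl x)) = 'X * ev (fun y => c (upw y)) (ruleL R x).
Proof.
have ev_R_succ c' s i :
    ev c' (R s i.+1) = 'X * ev (fun y => c' (upw y)) (R s i).
  by have /E_eqP -> := R_succ s i; rewrite ev_scaleE ev_upE.
case: x => [[s i] [|]] /=; last exact: ev_R_succ.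
rewrite !ev_oppE !ev_sandwich ev_R_succ mulrN; congr (- (_ * _)).
by apply: eq_ev => y; rewrite -reduce_upw !upw_cat.
Qed.

Lemma evD_upw c w : evD c (upw w) = 'X * evD (fun y => c (upw y)) w.
Proof.
elim: w c => [|x w IH] c; first by rewrite !evD_nil mulr0.
rewrite upw_cons !evD_cons IH ev_ruleL_upl mulrDr.
congr (_ * _ + _ * _); apply: eq_ev => y.
  by rewrite -reduce_upw upw_cat.
by rewrite -reduce_upw upw_cons.
Qed.

Lemma ev_qderiv_upE c h :
  ev c (D (upE h)) = 'X * ev (fun w => c (upw w)) (D h).
Proof.
rewrite ev_qderiv ev_upE ev_qderiv -ev_mull.
by apply: eq_ev => w; apply: evD_upw.
Qed.

Lemma ev_qderiv_upEn k c h :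
  ev c (D (upEn k h)) = 'X^k * ev c (upEn k (D h)).
Proof.
elim: k c => [|k IH] c; first by rewrite expr0 mul1r.
by rewrite /= ev_qderiv_upE IH ev_upE exprS mulrA.
Qed.

Lemma ev_mulE_qderiv_upEn k c f h :
  ev c (mulE f (D (upEn k h))) = 'X^k * ev c (mulE f (upEn k (D h))).
Proof.
by rewrite !ev_mulE -ev_mull; apply: eq_ev => u; apply: ev_qderiv_upEn.
Qed.

Lemma ev_qderivn_mul n c f g :
  ev c (qderivn R rho n (mulE f g)) =
  \sum_(0 <= k < n.+1) qbinom K n k *
     ev c (mulE (qderivn R rho k f) (upEn k (qderivn R rho (n - k) g))).
Proof.
elim: n c => [|n IH] c; first by rewrite big_nat1 mul1r.
rewrite [qderivn _ _ n.+1 _]/= ev_qderiv IH.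
pose T k m := ev c (mulE (qderivn R rho k f) (upEn k (qderivn R rho m g))).
rewrite -(qbinom_pascal_sum T); apply: eq_bigr => k _; congr (_ * _).
by rewrite -ev_qderiv ev_qderiv_mul ev_mulE_qderiv_upEn.
Qed.

End QDerivative.

Theorem proposition4p7 (K : comNzRingType) (S : eqType)
    (R : rule K S) (rho : word_order S) (n : nat) (f g : E K S) :
  char_zero K -> q_linear R rho -> (0 < n)%N ->
  E_eq (qderivn R rho n (mulE f g))
      (sumE [seq scaleE (qbinom K n k)
                   (mulE (qderivn R rho k f)
                         (upEn k (qderivn R rho (n - k)%N g)))
            | k <- iota 0 n.+1]).
Proof.
move=> _ [rhoK R_succ] _; apply/E_eqP => c.
rewrite ev_qderivn_mul // ev_sumE big_map.
by apply: eq_bigr => k _; rewrite ev_scaleE.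
Qed.
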